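(* For $a,b>0$ define $f_a(t)=\mathbf 1_{\{t>0\}}\big(1-a/\sqrt t\big)^+$. Then for all $t>0$, \[ f_b*f_a'(t)\ \ge\ f_{a+b}(t), \] and in fact for $t\ge a^2+b^2$, $f_b*f_a'(t)=1-\dfrac{a\sqrt{t-b^2}+b\sqrt{t-a^2}}{t}$.
   Context: Convolution: $f_1*f_2(t)=\int_0^t f_1(s)f_2(t-s)\,ds$; $f_a'$ denotes the (a.e.) derivative of $f_a$, namely $f_a'(s)=\frac{a}{2s^{3/2}}$ for $s>a^2$ and $0$ for $s<a^2$. *)

From Stdlib Require Import Reals Lra.
Open Scope R_scope.

Definition fa (a t : R) : R :=
  if Rlt_dec 0 t then Rmax 0 (1 - a / sqrt t) else 0.

(* a.e. derivative of f_a: a/(2 s^{3/2}) for s > a^2, 0 otherwise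
   (the value at the single point s = a^2 is irrelevant; we take 0). *)
Definition fa' (a s : R) : R :=
  if Rlt_dec (a ^ 2) s then a / (2 * (s * sqrt s)) else 0.

Definition conv_integrand (b a t : R) : R -> R :=
  fun s => fa b s * fa' a (t - s).

(* On [0, t] the factor f_b(s) vanishes for s <= b^2 and f_a'(t - s) vanishes for
   t - s <= a^2, so the convolution is an integral over [b^2, t - a^2], empty unless
   t >= a^2 + b^2.  There the integrand has the explicit primitive
   F(s) = a / sqrt (t - s) - (a b / t) sqrt s / sqrt (t - s), and F(t - a^2) - F(b^2)
   is the closed form.  The closed form dominates f_{a+b}(t) because
   a sqrt (t - b^2) + b sqrt (t - a^2) is at most t (Cauchy-Schwarz) and at most
   (a + b) sqrt t. *)

From Stdlib Require Import Reals Lra.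
From Coquelicot Require Import Coquelicot.
Open Scope R_scope.

Lemma one_sub_div_nonpos (x y : R) : 0 < y <= x -> 1 - x / y <= 0.
Proof.
  intros [hy hyx].
  replace (1 - x / y) with ((y - x) / y) by (field; lra).
  apply Rmult_le_0_r; [lra | left; apply Rinv_0_lt_compat; lra].
Qed.

Lemma one_sub_div_nonneg (x y : R) : 0 < y -> x <= y -> 0 <= 1 - x / y.
Proof.
  intros hy hxy.
  replace (1 - x / y) with ((y - x) / y) by (field; lra).
  apply Rdiv_le_0_compat; lra.
Qed.

Lemma fa_eq0 (b s : R) : 0 < b -> s <= b ^ 2 -> fa b s = 0.
Proof.
  intros hb hs. unfold fa.
  destruct (Rlt_dec 0 s) as [hs0 | _]; [| reflexivity].
  apply Rmax_left, one_sub_div_nonpos. split.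
  - apply sqrt_lt_R0; lra.
  - rewrite <- (sqrt_pow2 b) by lra. apply sqrt_le_1_alt; lra.
Qed.

Lemma fa_pos (b s : R) : 0 < b -> b ^ 2 <= s -> fa b s = 1 - b / sqrt s.
Proof.
  intros hb hs. unfold fa.
  assert (hs0 : 0 < s) by nra.
  destruct (Rlt_dec 0 s) as [_ | hn]; [| contradiction].
  apply Rmax_right, one_sub_div_nonneg.
  - apply sqrt_lt_R0; assumption.
  - rewrite <- (sqrt_pow2 b) by lra. apply sqrt_le_1_alt; lra.
Qed.

Lemma conv_integrand_eq0 (a b t s : R) :
  0 < b -> s <= b ^ 2 \/ t - s <= a ^ 2 -> conv_integrand b a t s = 0.
Proof.
  intros hb [hs | hs]; unfold conv_integrand.
  - rewrite fa_eq0 by assumption. ring.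
  - unfold fa'. destruct (Rlt_dec (a ^ 2) (t - s)); [lra | ring].
Qed.

Definition conv_density (b a t s : R) : R :=
  (1 - b / sqrt s) * (a / (2 * ((t - s) * sqrt (t - s)))).

Lemma conv_integrand_eq_density (a b t s : R) :
  0 < b -> b ^ 2 <= s -> a ^ 2 < t - s -> conv_integrand b a t s = conv_density b a t s.
Proof.
  intros hb hs hts. unfold conv_integrand, conv_density, fa'.
  rewrite fa_pos by assumption.
  destruct (Rlt_dec (a ^ 2) (t - s)); [reflexivity | lra].
Qed.

Definition conv_primitive (b a t s : R) : R :=
  a / sqrt (t - s) - (a * b / t) * (sqrt s / sqrt (t - s)).

Lemma is_derive_conv_primitive (a b t s : R) :
  0 < a -> 0 < b -> b ^ 2 <= s <= t - a ^ 2 ->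
  is_derive (conv_primitive b a t) s (conv_density b a t s).
Proof.
  intros ha hb hs.
  assert (hs0 : 0 < s) by nra.
  assert (hts : 0 < t - s) by nra.
  assert (hu := sqrt_lt_R0 s hs0).
  assert (hv := sqrt_lt_R0 _ hts).
  unfold conv_primitive, conv_density. auto_derive.
  - replace (t + - s) with (t - s) by ring. repeat split; lra.
  - replace (t + - s) with (t - s) by ring.
    assert (hu2 := sqrt_sqrt s (Rlt_le _ _ hs0)).
    assert (hv2 := sqrt_sqrt (t - s) (Rlt_le _ _ hts)).
    (* With t = u^2 + v^2 the identity becomes rational in u = sqrt s, v = sqrt (t - s). *)
    set (u := sqrt s) in *. set (v := sqrt (t - s)) in *.
    rewrite <- hv2. replace t with (u * u + v * v) by lra.
    field. repeat split; nra.
Qed.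

Lemma continuous_conv_density (a b t s : R) :
  0 < s -> 0 < t - s -> continuous (conv_density b a t) s.
Proof.
  intros hs0 hts.
  assert (hu := sqrt_lt_R0 s hs0).
  assert (hv := sqrt_lt_R0 _ hts).
  apply (@ex_derive_continuous R_AbsRing R_NormedModule).
  unfold conv_density. auto_derive.
  replace (t + - s) with (t - s) by ring. repeat split; nra.
Qed.

Lemma conv_primitive_upper (a b t : R) :
  0 < a -> a ^ 2 < t ->
  conv_primitive b a t (t - a ^ 2) = 1 - b * sqrt (t - a ^ 2) / t.
Proof.
  intros ha ht. unfold conv_primitive.
  replace (t - (t - a ^ 2)) with (a ^ 2) by ring.
  rewrite sqrt_pow2 by lra. field. split; nra.
Qed.

Lemma conv_primitive_lower (a b t : R) :
  0 < b -> b ^ 2 < t -> conv_primitive b a t (b ^ 2) = a * sqrt (t - b ^ 2) / t.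
Proof.
  intros hb ht. unfold conv_primitive. rewrite sqrt_pow2 by lra.
  assert (hv2 := sqrt_sqrt (t - b ^ 2) ltac:(lra)).
  assert (hv := sqrt_lt_R0 (t - b ^ 2) ltac:(lra)).
  set (v := sqrt (t - b ^ 2)) in *. clearbody v.
  replace t with (v * v + b ^ 2) by lra.
  field. split; nra.
Qed.

Lemma is_RInt_zero (f : R -> R) (x y : R) :
  (forall s, Rmin x y < s < Rmax x y -> f s = 0) -> is_RInt f x y 0.
Proof.
  intros hf. apply is_RInt_ext with (fun _ => 0).
  - intros s hs. symmetry. exact (hf s hs).
  - pose proof (is_RInt_const x y 0) as h0.
    change (scal (y - x) 0) with ((y - x) * 0) in h0.
    rewrite Rmult_0_r in h0. exact h0.
Qed.

Lemma is_RInt_conv_large (a b t : R) :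
  0 < a -> 0 < b -> a ^ 2 + b ^ 2 <= t ->
  is_RInt (conv_integrand b a t) 0 t
    (1 - (a * sqrt (t - b ^ 2) + b * sqrt (t - a ^ 2)) / t).
Proof.
  intros ha hb ht.
  assert (ha2 : 0 < a ^ 2) by nra.
  assert (hb2 : 0 < b ^ 2) by nra.
  assert (int_left : is_RInt (conv_integrand b a t) 0 (b ^ 2) 0).
  { apply is_RInt_zero. intros s hs.
    rewrite Rmin_left, Rmax_right in hs by lra.
    apply conv_integrand_eq0; lra. }
  assert (int_right : is_RInt (conv_integrand b a t) (t - a ^ 2) t 0).
  { apply is_RInt_zero. intros s hs.
    rewrite Rmin_left, Rmax_right in hs by lra.
    apply conv_integrand_eq0; lra. }
  assert (int_mid : is_RInt (conv_integrand b a t) (b ^ 2) (t - a ^ 2)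
                 (minus (conv_primitive b a t (t - a ^ 2)) (conv_primitive b a t (b ^ 2)))).
  { apply is_RInt_ext with (conv_density b a t).
    - intros s hs. rewrite Rmin_left, Rmax_right in hs by lra.
      symmetry. apply conv_integrand_eq_density; lra.
    - apply (@is_RInt_derive R_CompleteNormedModule); intros s hs;
        rewrite Rmin_left, Rmax_right in hs by lra.
      + apply is_derive_conv_primitive; auto.
      + apply continuous_conv_density; nra. }
  replace (1 - (a * sqrt (t - b ^ 2) + b * sqrt (t - a ^ 2)) / t)
    with (plus (plus 0 (minus (conv_primitive b a t (t - a ^ 2))
                              (conv_primitive b a t (b ^ 2)))) 0).
  - exact (is_RInt_Chasles _ _ _ _ _ _ (is_RInt_Chasles _ _ _ _ _ _ int_left int_mid) int_right).
  - rewrite conv_primitive_upper, conv_primitive_lower by lra.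
    unfold minus, plus, opp; simpl. field. lra.
Qed.

Lemma is_RInt_conv_small (a b t : R) :
  0 < b -> t < a ^ 2 + b ^ 2 -> is_RInt (conv_integrand b a t) 0 t 0.
Proof.
  intros hb ht. apply is_RInt_zero. intros s _.
  apply conv_integrand_eq0; [assumption |].
  destruct (Rle_lt_dec s (b ^ 2)); [left | right]; lra.
Qed.

Lemma fa_le_closed_form (a b t : R) :
  0 < a -> 0 < b -> a ^ 2 + b ^ 2 <= t ->
  fa (a + b) t <= 1 - (a * sqrt (t - b ^ 2) + b * sqrt (t - a ^ 2)) / t.
Proof.
  intros ha hb ht.
  assert (ht0 : 0 < t) by nra.
  assert (hu2 := sqrt_sqrt (t - b ^ 2) ltac:(nra)).
  assert (hv2 := sqrt_sqrt (t - a ^ 2) ltac:(nra)).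
  assert (hw2 := sqrt_sqrt t ltac:(lra)).
  assert (hu := sqrt_pos (t - b ^ 2)).
  assert (hv := sqrt_pos (t - a ^ 2)).
  assert (hw := sqrt_lt_R0 t ht0).
  unfold fa. destruct (Rlt_dec 0 t) as [_ | ]; [| lra].
  set (u := sqrt (t - b ^ 2)) in *. set (v := sqrt (t - a ^ 2)) in *.
  set (w := sqrt t) in *.
  (* Cauchy-Schwarz for (a, v) and (u, b): (a u + b v)^2 <= (a^2 + v^2) (u^2 + b^2) = t^2. *)
  assert (hle_t : a * u + b * v <= t).
  { assert (0 <= (a * b - u * v) ^ 2) by apply pow2_ge_0.
    assert ((a * u + b * v) ^ 2 <= t * t) by nra. nra. }
  assert (huw : u <= w) by nra.
  assert (hvw : v <= w) by nra.
  assert (hle_w : a * u + b * v <= (a + b) * w) by nra.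
  apply Rmax_lub.
  - apply one_sub_div_nonneg; lra.
  - replace ((a + b) / w) with ((a + b) * w / t) by (rewrite <- hw2; field; lra).
    unfold Rdiv. apply Rplus_le_compat_l, Ropp_le_contravar.
    apply Rmult_le_compat_r; [left; apply Rinv_0_lt_compat |]; lra.
Qed.

Lemma is_RInt_conv (a b t : R) :
  0 < a -> 0 < b -> 0 < t ->
  exists v, is_RInt (conv_integrand b a t) 0 t v /\ fa (a + b) t <= v /\
    (a ^ 2 + b ^ 2 <= t -> v = 1 - (a * sqrt (t - b ^ 2) + b * sqrt (t - a ^ 2)) / t).
Proof.
  intros ha hb ht.
  destruct (Rle_lt_dec (a ^ 2 + b ^ 2) t) as [hl | hl].
  - eexists. split; [apply is_RInt_conv_large; assumption |].
    split; [apply fa_le_closed_form; assumption | reflexivity].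
  - exists 0. split; [apply is_RInt_conv_small; assumption |].
    split; [| lra].
    rewrite fa_eq0 by nra. lra.
Qed.

Theorem mainTheorem11 (a b t : R) (ha : 0 < a) (hb : 0 < b) (ht : 0 < t) :
  exists pr : Riemann_integrable (conv_integrand b a t) 0 t,
    RiemannInt pr >= fa (a + b) t /\
    (a ^ 2 + b ^ 2 <= t ->
       RiemannInt pr = 1 - (a * sqrt (t - b ^ 2) + b * sqrt (t - a ^ 2)) / t).
Proof.
  destruct (is_RInt_conv a b t ha hb ht) as (v & hv & hge & hclosed).
  exists (ex_RInt_Reals_0 _ _ _ (ex_intro _ v hv)).
  rewrite <- RInt_Reals, (is_RInt_unique _ _ _ _ hv).
  split; [apply Rle_ge |]; assumption.
Qed.
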